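(* Let $\mathcal M,\mathcal M'$ be finite polyptych lattices over $F$ with index sets $I,I'$, and let $\mathrm{pr}:\mathcal M\times\mathcal M'\to\mathcal M$, $\mathrm{pr}':\mathcal M\times\mathcal M'\to\mathcal M'$ be the projections on sets of elements. Then $(p,p')\mapsto p\circ\mathrm{pr}+p'\circ\mathrm{pr}'$ is a bijection $\mathrm{Sp}(\mathcal M)\times\mathrm{Sp}(\mathcal M')\to\mathrm{Sp}(\mathcal M\times\mathcal M')$, and it maps $\mathrm{Sp}(\mathcal M,\alpha)\times\mathrm{Sp}(\mathcal M',\alpha')$ into $\mathrm{Sp}(\mathcal M\times\mathcal M',(\alpha,\alpha'))$ for all $\alpha\in I,\alpha'\in I'$.
   Context: Fix a subring $F$ with $\mathbb Z\subseteq F\subseteq\mathbb R$. A polyptych lattice of rank $r$ over $F$ is a collection $\{M_\alpha\}_{\alpha\in I}$ of free $F$-modules of rank $r$ with piecewise $F$-linear maps (continuous and $F$-linear on each cone of some complete $F$-rational fan) $\mu_{\alpha,\beta}:M_\alpha\to M_\beta$ with $\mu_{\alpha,\alpha}=\mathrm{id}$, $\mu_{\alpha,\beta}=\mu_{\beta,\alpha}^{-1}$, $\mu_{\beta,\gamma}\circ\mu_{\alpha,\beta}=\mu_{\alpha,\gamma}$; finite if $I$ is finite. Elements are classes of $\bigsqcup M_\alpha$ under $m_\alpha\sim\mu_{\alpha,\beta}(m_\alpha)$, $\pi_\alpha$ the chart maps, $m+_\alpha m':=\pi_\alpha^{-1}(\pi_\alpha(m)+\pi_\alpha(m'))$, $\lambda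 m:=\pi_\alpha^{-1}(\lambda\pi_\alpha(m))$ ($\lambda\ge 0$). A point is $p:\mathcal M\to F$ with $p(m)+p(m')=\min_\alpha p(m+_\alpha m')$ and $p(\lambda m)=\lambda p(m)$ ($\lambda\in F_{\ge0}$); $\mathrm{Sp}(\mathcal M)$ is the set of points and $\mathrm{Sp}(\mathcal M,\alpha)$ those $p$ with $p\circ\pi_\alpha^{-1}$ $F$-linear. The product polyptych lattice $\mathcal M\times\mathcal M'$ (rank $r+r'$) has charts $M_\alpha\times M'_{\alpha'}$ indexed by $(\alpha,\alpha')\in I\times I'$ and mutations $\mu_{\alpha,\beta}\times\mu'_{\alpha',\beta'}$; its elements are pairs $(m,m')$. *)

From HB Require Import structures.
From mathcomp Require Import all_boot all_order all_algebra.
From mathcomp Require Import reals.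
Set Implicit Arguments. Unset Strict Implicit. Unset Printing Implicit Defensive.
Import Order.TTheory GRing.Theory Num.Theory.
Local Open Scope ring_scope.

Definition Fvec (R : realType) (F : {pred R}) (r : nat) (v : 'rV[R]_r) : Prop :=
  forall j, v 0 j \in F.

Definition dotv (R : realType) (r : nat) (u x : 'rV[R]_r) : R := (u *m x^T) 0 0.

Definition cone_of (R : realType) (r : nat) (gs : seq 'rV[R]_r) (x : 'rV[R]_r) : Prop :=
  exists c : 'I_(size gs) -> R,
    (forall i, 0 <= c i) /\ x = \sum_(i < size gs) c i *: gs`_i.

Definition is_face (R : realType) (r : nat) (S T : 'rV[R]_r -> Prop) : Prop :=
  exists u : 'rV[R]_r, (forall x, S x -> 0 <= dotv u x) /\
    (forall x, T x <-> (S x /\ dotv u x = 0)).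

Definition complete_Frational_fan (R : realType) (F : {pred R}) (r : nat)
    (Sigma : seq (seq 'rV[R]_r)) : Prop :=
  [/\ (forall s, s \in Sigma -> forall g, g \in s -> Fvec F g),
      (forall s, s \in Sigma -> forall x, cone_of s x -> cone_of s (- x) -> x = 0),
      (forall s, s \in Sigma -> forall T, is_face (cone_of s) T ->
          exists2 t, t \in Sigma & forall x, T x <-> cone_of t x),
      (forall s t, s \in Sigma -> t \in Sigma ->
          is_face (cone_of s) (fun x => cone_of s x /\ cone_of t x) /\
          is_face (cone_of t) (fun x => cone_of s x /\ cone_of t x))
    & (forall x, exists2 s, s \in Sigma & cone_of s x)].

(* a piecewise F-linear map F^r -> F^r (only its values on F^r matter):
   maps F^r into F^r, is continuous (for the topology of F^r inherited from
   R^r), and is F-linear on (the F-points of) each cone of some complete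
   F-rational fan *)
Definition piecewise_Flinear (R : realType) (F : {pred R}) (r : nat)
    (f : 'rV[R]_r -> 'rV[R]_r) : Prop :=
  [/\ (forall v, Fvec F v -> Fvec F (f v)),
      (forall v, Fvec F v -> forall eps : R, 0 < eps -> exists2 delta : R, 0 < delta &
          forall w, Fvec F w -> (forall j, `|w 0 j - v 0 j| < delta) ->
            forall j, `|f w 0 j - f v 0 j| < eps)
    & exists Sigma, complete_Frational_fan F Sigma /\
        forall s, s \in Sigma -> exists A : 'M[R]_r, (forall i j, A i j \in F) /\
          forall v, Fvec F v -> cone_of s v -> f v = v *m A].

(* a polyptych lattice of rank r over F, with (nonempty) index type I,
   charts M_alpha = F^r and mutations mu alpha beta : M_alpha -> M_beta *)
Definition is_polyptych (R : realType) (F : {pred R}) (I : Type) (r : nat)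
    (mu : I -> I -> 'rV[R]_r -> 'rV[R]_r) : Prop :=
  [/\ inhabited I,
      (forall a b, piecewise_Flinear F (mu a b)),
      (forall a v, Fvec F v -> mu a a v = v),
      (forall a b v, Fvec F v -> mu b a (mu a b v) = v)
    & (forall a b c v, Fvec F v -> mu b c (mu a b v) = mu a c v)].

(* An element of the polyptych lattice
   is a class [(alpha, v)] of the disjoint union; a function on the set of
   elements is represented by f : I -> V -> R with f alpha v = value at
   [(alpha, v)], required to be constant on classes. *)

Definition is_mfun (R : realType) (I : Type) (V : lmodType R) (FV : V -> Prop)
    (mu : I -> I -> V -> V) (f : I -> V -> R) : Prop :=
  forall a b v, FV v -> f b (mu a b v) = f a v.

(* [(b,v)] +_a [(c,w)] = [(a, mu b a v + mu c a w)];
   lam [(a,v)] = [(a, lam v)] *)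
Definition is_point (R : realType) (F : {pred R}) (I : Type) (V : lmodType R)
    (FV : V -> Prop) (mu : I -> I -> V -> V) (f : I -> V -> R) : Prop :=
  [/\ is_mfun FV mu f,
      (forall a v, FV v -> f a v \in F),
      (forall b v c w, FV v -> FV w ->
          (forall a, f b v + f c w <= f a (mu b a v + mu c a w)) /\
          (exists a, f b v + f c w = f a (mu b a v + mu c a w)))
    & (forall lam a v, lam \in F -> 0 <= lam -> FV v -> f a (lam *: v) = lam * f a v)].

(* Sp(M, alpha): p o pi_alpha^{-1} is F-linear on M_alpha *)
Definition is_point_in (R : realType) (F : {pred R}) (I : Type) (V : lmodType R)
    (FV : V -> Prop) (mu : I -> I -> V -> V) (f : I -> V -> R) (a : I) : Prop :=
  [/\ is_point F FV mu f,
      (forall v w, FV v -> FV w -> f a (v + w) = f a v + f a w)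
    & (forall lam v, lam \in F -> FV v -> f a (lam *: v) = lam * f a v)].

Definition same_fun (R : realType) (I : Type) (V : lmodType R) (FV : V -> Prop)
    (f g : I -> V -> R) : Prop :=
  forall a v, FV v -> f a v = g a v.

Definition prod_FV (R : realType) (F : {pred R}) (r r' : nat)
    (x : ('rV[R]_r * 'rV[R]_r')%type) : Prop :=
  Fvec F x.1 /\ Fvec F x.2.

Definition prod_mu (R : realType) (I I' : Type) (r r' : nat)
    (mu : I -> I -> 'rV[R]_r -> 'rV[R]_r) (mu' : I' -> I' -> 'rV[R]_r' -> 'rV[R]_r')
    (a b : (I * I')%type) (x : ('rV[R]_r * 'rV[R]_r')%type) : ('rV[R]_r * 'rV[R]_r')%type :=
  (mu a.1 b.1 x.1, mu' a.2 b.2 x.2).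

(* (p, p') |-> p o pr + p' o pr'  where pr [((a,a'),(v,v'))] = [(a,v)] *)
Definition sum_pr (R : realType) (I I' : Type) (r r' : nat)
    (p : I -> 'rV[R]_r -> R) (p' : I' -> 'rV[R]_r' -> R)
    (a : (I * I')%type) (x : ('rV[R]_r * 'rV[R]_r')%type) : R :=
  p a.1 x.1 + p' a.2 x.2.

(* A point of a product is determined by its restrictions to the two factors
   M x {0} and {0} x M': comparing p(m, m') with p(m, 0) + p(0, m') through
   the minimum defining a point, both sides are the value of p at one element
   of a common chart, because every mutation fixes 0.  Conversely the sum of
   two points is a point since the product mutations act componentwise, so a
   minimum over I x I' splits into a minimum over I plus one over I'. *)
From HB Require Import structures.
From mathcomp Require Import all_boot all_order all_algebra.
From mathcomp Require Import reals.
Import Order.TTheory GRing.Theory Num.Theory.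
Local Open Scope ring_scope.

Set Implicit Arguments. Unset Strict Implicit.

Section ChartSystem.
Variables (R : realType) (F : {pred R}) (I : Type) (V : lmodType R).
Variables (FV : V -> Prop) (mu : I -> I -> V -> V).

Lemma point_at0 (p : I -> V -> R) :
  0 \in F -> FV 0 -> is_point F FV mu p -> forall a, p a 0 = 0.
Proof.
move=> F0 FV0 [_ _ _ p_scale] a.
by have := p_scale 0 a 0 F0 (lexx 0) FV0; rewrite scale0r mul0r.
Qed.

(* [e] and [iota] embed the chart system (I, V) into (J, W); [pi] sends every
   chart of (J, W) back to the chart of (I, V) it restricts to. *)
Variables (J : Type) (W : lmodType R) (FW : W -> Prop) (nu : J -> J -> W -> W).
Variables (iota : I -> J) (pi : J -> I) (e : V -> W).
Hypotheses (iotaK : cancel iota pi)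
  (eD : forall v w, e (v + w) = e v + e w)
  (eZ : forall l v, e (l *: v) = l *: e v)
  (e_FV : forall v, FV v -> FW (e v))
  (nu_e : forall a b v, FV v -> nu (iota a) b (e v) = e (mu a (pi b) v))
  (FVD : forall v w, FV v -> FV w -> FV (v + w))
  (mu_FV : forall a b v, FV v -> FV (mu a b v))
  (mu_id : forall a v, FV v -> mu a a v = v).

Lemma point_restrict (P : J -> W -> R) :
  is_point F FW nu P -> is_point F FV mu (fun a v => P (iota a) (e v)).
Proof.
case=> P_mfun P_F P_min P_scale.
have P_pi x u : FV u -> P (iota (pi x)) (e u) = P x (e u).
  by move=> FVu; rewrite -(P_mfun (iota (pi x)) x) ?nu_e ?mu_id //; exact: e_FV.
split=> [a b v FVv | a v FVv | b v c w FVv FVw | l a v Fl l_ge0 FVv].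
- by rewrite -(P_mfun (iota a) (iota b)) ?nu_e ?iotaK //; exact: e_FV.
- exact/P_F/e_FV.
- have [P_le [x P_eq]] := P_min (iota b) _ (iota c) _ (e_FV FVv) (e_FV FVw).
  split=> [a|]; last exists (pi x).
  + by have := P_le (iota a); rewrite !nu_e // iotaK eD.
  + by rewrite P_eq !nu_e // -eD P_pi //; apply: FVD; exact: mu_FV.
- by rewrite eZ P_scale //; exact: e_FV.
Qed.

End ChartSystem.

Section Polyptych.
Variables (R : realType) (F : {pred R}) (HF : subring_closed F).
Variables (I : Type) (r : nat) (mu : I -> I -> 'rV[R]_r -> 'rV[R]_r).
Hypothesis HM : is_polyptych F mu.

Lemma rpred0F : 0 \in F.
Proof. by case: (GRing.zmod_closedD (GRing.subring_closedB HF)). Qed.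

Lemma rpredDF : {in F &, forall x y, x + y \in F}.
Proof. by case: (GRing.zmod_closedD (GRing.subring_closedB HF)). Qed.

Lemma Fvec0 : Fvec F (0 : 'rV[R]_r).
Proof. by move=> j; rewrite mxE rpred0F. Qed.

Lemma FvecD (v w : 'rV[R]_r) : Fvec F v -> Fvec F w -> Fvec F (v + w).
Proof. by move=> Fv Fw j; rewrite mxE rpredDF. Qed.

Lemma polyptych_Fvec a b v : Fvec F v -> Fvec F (mu a b v).
Proof. by case: HM => _ mu_pl _ _ _; case: (mu_pl a b) => mu_F _ _; apply: mu_F. Qed.

Lemma polyptych_id a v : Fvec F v -> mu a a v = v.
Proof. by case: HM => _ _ mu_id _ _; apply: mu_id. Qed.

(* 0 lies in some cone of the fan, on which [mu a b] is linear. *)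
Lemma polyptych_mu0 a b : mu a b 0 = 0.
Proof.
case: HM => _ mu_pl _ _ _; case: (mu_pl a b) => _ _ [Sigma [[_ _ _ _ cover] lin]].
have [s s_Sigma s0] := cover 0; have [A [_ ->]] := lin s s_Sigma.
- exact: mul0mx.
- exact: Fvec0.
- exact: s0.
Qed.

End Polyptych.

Arguments Fvec0 {R F} HF {r}.

Section Product.
Variables (R : realType) (F : {pred R}) (HF : subring_closed F).
Variables (I I' : Type) (r r' : nat).
Variables (mu : I -> I -> 'rV[R]_r -> 'rV[R]_r) (mu' : I' -> I' -> 'rV[R]_r' -> 'rV[R]_r').
Hypotheses (HM : is_polyptych F mu) (HM' : is_polyptych F mu').

Local Notation point := (is_point F (@Fvec R F r) mu).
Local Notation point' := (is_point F (@Fvec R F r') mu').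
Local Notation prod_point := (is_point F (@prod_FV R F r r') (prod_mu mu mu')).

Lemma sum_pr_point p p' : point p -> point' p' -> prod_point (sum_pr p p').
Proof.
case=> p_mfun p_F p_min p_scale [p'_mfun p'_F p'_min p'_scale].
split=> [[a a'] [b b'] [v v'] [Fv Fv'] | [a a'] [v v'] [Fv Fv'] |
         [b b'] [v v'] [c c'] [w w'] [Fv Fv'] [Fw Fw'] |
         l [a a'] [v v'] Fl l_ge0 [Fv Fv']]; rewrite /sum_pr /prod_mu /=.
- by rewrite p_mfun // p'_mfun.
- by rewrite rpredDF ?p_F ?p'_F.
- have [p_le [x p_eq]] := p_min b v c w Fv Fw.
  have [p'_le [x' p'_eq]] := p'_min b' v' c' w' Fv' Fw'.
  split=> [[a a'] /=|]; first by rewrite addrACA lerD.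
  by exists (x, x'); rewrite /= addrACA p_eq p'_eq.
- by rewrite p_scale // p'_scale // mulrDr.
Qed.

Lemma sum_pr_point_in a a' p p' :
  is_point_in F (@Fvec R F r) mu p a -> is_point_in F (@Fvec R F r') mu' p' a' ->
  is_point_in F (@prod_FV R F r r') (prod_mu mu mu') (sum_pr p p') (a, a').
Proof.
case=> pP pD pZ [p'P p'D p'Z]; split; first exact: sum_pr_point.
- by move=> [v v'] [w w'] [Fv Fv'] [Fw Fw']; rewrite /sum_pr /= pD // p'D // addrACA.
- by move=> l [v v'] Fl [Fv Fv']; rewrite /sum_pr /= pZ // p'Z // mulrDr.
Qed.

Lemma sum_pr_inj (a0 : I) (a0' : I') p p' q q' :
  point p -> point' p' -> point q -> point' q' ->
  same_fun (@prod_FV R F r r') (sum_pr p p') (sum_pr q q') ->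
  same_fun (@Fvec R F r) p q /\ same_fun (@Fvec R F r') p' q'.
Proof.
move=> pP p'P qP q'P pq.
have at0 := point_at0 (rpred0F HF) (Fvec0 HF).
split=> [a v Fv | a' v' Fv'].
- have := pq (a, a0') (v, 0) (conj Fv (Fvec0 HF)).
  by rewrite /sum_pr /= (at0 _ _ _ _ p'P) (at0 _ _ _ _ q'P) !addr0.
- have := pq (a0, a') (0, v') (conj (Fvec0 HF) Fv').
  by rewrite /sum_pr /= (at0 _ _ _ _ pP) (at0 _ _ _ _ qP) !add0r.
Qed.

Lemma prod_point_split (a0 : I) (a0' : I') P : prod_point P ->
  forall a a' v v', Fvec F v -> Fvec F v' ->
  P (a, a') (v, v') = P (a, a0') (v, 0) + P (a0, a') (0, v').
Proof.
case=> P_mfun _ P_min _ a a' v v' Fv Fv'.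
have [_ [x ->]] := P_min (a, a0') (v, 0) (a0, a') (0, v')
  (conj Fv (Fvec0 HF)) (conj (Fvec0 HF) Fv').
rewrite -(P_mfun (a, a') x) //; congr (P x _).
rewrite /prod_mu /= (polyptych_mu0 HF HM) (polyptych_mu0 HF HM').
by congr (_, _); rewrite /= ?addr0 ?add0r.
Qed.

Lemma prod_point_restrict_l (a0' : I') P :
  prod_point P -> point (fun a v => P (a, a0') (v, 0)).
Proof.
apply: (point_restrict (iota := fun a => (a, a0')) (pi := fst) (e := fun v => (v, 0)))
  => //=.
- by move=> v w; congr (_, _); rewrite /= addr0.
- by move=> l v; congr (_, _); rewrite /= scaler0.
- by move=> v Fv; split; last exact: Fvec0.
- by move=> a b v _; rewrite /prod_mu /= (polyptych_mu0 HF HM').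
- exact: (FvecD HF).
- exact: (polyptych_Fvec HM).
- exact: (polyptych_id HM).
Qed.

Lemma prod_point_restrict_r (a0 : I) P :
  prod_point P -> point' (fun a' v' => P (a0, a') (0, v')).
Proof.
apply: (point_restrict (iota := fun a' => (a0, a')) (pi := snd) (e := fun v' => (0, v')))
  => //=.
- by move=> v w; congr (_, _); rewrite /= addr0.
- by move=> l v; congr (_, _); rewrite /= scaler0.
- by move=> v Fv; split; first exact: Fvec0.
- by move=> a b v _; rewrite /prod_mu /= (polyptych_mu0 HF HM).
- exact: (FvecD HF).
- exact: (polyptych_Fvec HM').
- exact: (polyptych_id HM').
Qed.

End Product.

Theorem mainTheorem5 (R : realType) (F : {pred R}) (HF : subring_closed F)
    (I I' : finType) (r r' : nat)
    (mu : I -> I -> 'rV[R]_r -> 'rV[R]_r) (mu' : I' -> I' -> 'rV[R]_r' -> 'rV[R]_r')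
    (HM : is_polyptych F mu) (HM' : is_polyptych F mu') :
  [/\ (* the map lands in Sp(M x M') *)
      (forall p p', is_point F (@Fvec R F r) mu p -> is_point F (@Fvec R F r') mu' p' ->
         is_point F (@prod_FV R F r r') (prod_mu mu mu') (sum_pr p p')),
      (* injective *)
      (forall p p' q q',
         is_point F (@Fvec R F r) mu p -> is_point F (@Fvec R F r') mu' p' ->
         is_point F (@Fvec R F r) mu q -> is_point F (@Fvec R F r') mu' q' ->
         same_fun (@prod_FV R F r r') (sum_pr p p') (sum_pr q q') ->
         same_fun (@Fvec R F r) p q /\ same_fun (@Fvec R F r') p' q'),
      (* surjective *)
      (forall P, is_point F (@prod_FV R F r r') (prod_mu mu mu') P ->
         exists p, exists p',
           [/\ is_point F (@Fvec R F r) mu p, is_point F (@Fvec R F r') mu' p'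
             & same_fun (@prod_FV R F r r') P (sum_pr p p')])
    & (* maps Sp(M,a) x Sp(M',a') into Sp(M x M',(a,a')) *)
      (forall (a : I) (a' : I') p p',
         is_point_in F (@Fvec R F r) mu p a -> is_point_in F (@Fvec R F r') mu' p' a' ->
         is_point_in F (@prod_FV R F r r') (prod_mu mu mu') (sum_pr p p') (a, a'))].
Proof.
have [[a0] _ _ _ _] := HM; have [[a0'] _ _ _ _] := HM'.
split.
- exact: sum_pr_point.
- exact: (sum_pr_inj HF a0 a0').
- move=> P PP; exists (fun a v => P (a, a0') (v, 0)), (fun a' v' => P (a0, a') (0, v')).
  split; first exact: (prod_point_restrict_l HF HM HM').
  + exact: (prod_point_restrict_r HF HM HM').
  + by move=> [a a'] [v v'] [Fv Fv']; exact: (prod_point_split HF HM HM').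
- exact: sum_pr_point_in.
Qed.
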